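(* For every positive integer $n$, $\delta(n)\le 13\log_6 n+7$; that is, $n\in E_k$ for every integer $k\ge 13\log_6 n+7$.
   Context: For a finite nonempty multiset $S$ of real numbers, $V(S)$ is the smallest set of real numbers such that: (1) if $|S|=1$ then $S\subseteq V(S)$; (2) if $|S|\ge 2$, then for all nonempty multisets $A,B$ with $A+B=S$ (multiplicities add) and all $a\in V(A)$, $b\in V(B)$, each of $a+b,\ a-b,\ b-a,\ ab,\ a/b,\ b/a,\ a^b,\ b^a$ lies in $V(S)$ whenever it is a well-defined real number; (3) if $a\in V(S)$ is a nonnegative integer then $a!\in V(S)$ (with $0!=1$). Let $D=\{0,\dots,9\}$; for $k\ge1$, $E_k$ is the intersection of $V(S)$ over all multisets $S$ of size $k$ with all elements in $D$ (one has $E_k\subseteq E_{k+1}$). For a number $n$, $\delta(n)=\min\{k\ge1: n\in E_k\}$. *)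

From Stdlib Require Import Reals List Permutation ZArith.
Open Scope R_scope.

(* rpow_rel a b c : a^b is a well-defined real number equal to c.
   Defined when a > 0 (any real b), a = 0 and b > 0 (value 0),
   or a < 0 and b an integer (value powerRZ a b). 0^0 is undefined. *)
Inductive rpow_rel : R -> R -> R -> Prop :=
| rpow_pos : forall a b, 0 < a -> rpow_rel a b (Rpower a b)
| rpow_zero : forall b, 0 < b -> rpow_rel 0 b 0
| rpow_negint : forall a (z : Z), a < 0 -> rpow_rel a (IZR z) (powerRZ a z).

Definition op_res (a b c : R) : Prop :=
  c = a + b \/ c = a - b \/ c = b - a \/ c = a * b \/
  (b <> 0 /\ c = a / b) \/ (a <> 0 /\ c = b / a) \/
  rpow_rel a b c \/ rpow_rel b a c.

(* InV S x : x is in V(S), with the multiset S represented by a list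
   (up to permutation). *)
Inductive InV : list R -> R -> Prop :=
| InV_single : forall x, InV (x :: nil) x
| InV_comb : forall (A B S : list R) (a b c : R),
    A <> nil -> B <> nil -> Permutation (A ++ B) S ->
    InV A a -> InV B b -> op_res a b c -> InV S c
| InV_fact : forall (S : list R) (m : nat),
    InV S (INR m) -> InV S (INR (fact m)).

Definition InE (k : nat) (x : R) : Prop :=
  forall ds : list nat, length ds = k -> Forall (fun d => (d < 10)%nat) ds ->
    InV (map INR ds) x.

Definition log6 (x : R) : R := ln x / ln 6.

From Stdlib Require Import Reals Arith List Permutation Lia NArith Lra.
Open Scope R_scope.

(* Greedily remove from a multiset of digits blocks of value one: a single 0 or 1
   (0! = 1), or two digits among {2,3}, {4,5}, {6,7}, {8,9} (quotient 1 or
   difference 1).  At most one digit of each pair survives, so k digits give at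
   least (k - 4) / 2 such blocks; leftovers are swallowed by a block since
   1 ^ y = 1, and blocks can be merged since 1 * 1 = 1.  On the other side,
   writing n = 6 m + r (r <= 3) or n = 6 (m + 1) - s (s <= 2), with 6 = 3!
   built from three ones, shows by induction that n is a formula in u ones
   with 6 ^ (2 u) <= 36 n ^ 13.  The two bounds meet when k >= 13 log_6 n + 7. *)

Lemma InV_perm (S : list R) (x : R) :
  InV S x -> forall S', Permutation S S' -> InV S' x.
Proof.
  induction 1 as [x | A B S a b c HA HB HAB _ IHa _ IHb Hop | S m _ IHm];
    intros S' HS.
  - apply Permutation_length_1_inv in HS; subst; constructor.
  - apply (InV_comb A B S' a b c); auto. now apply perm_trans with S.
  - apply InV_fact; auto.
Qed.

Lemma InV_not_nil (S : list R) (x : R) : InV S x -> S <> nil.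
Proof.
  induction 1 as [x | A B S a b c HA HB HAB | ]; try congruence.
  intros ->. apply Permutation_sym, Permutation_nil, app_eq_nil in HAB.
  tauto.
Qed.

Lemma InV_exists (S : list R) : S <> nil -> exists y, InV S y.
Proof.
  induction S as [|a S IH]; intros HS; [congruence|].
  destruct S as [|b S]; [exists a; constructor|].
  destruct IH as [y Hy]; [discriminate|].
  exists (a + y).
  apply (InV_comb (a :: nil) (b :: S) _ a y); try discriminate.
  - apply Permutation_refl.
  - constructor.
  - assumption.
  - now left.
Qed.

(* [1 ^ y = 1], so a block evaluating to 1 swallows any further digits. *)
Lemma InV_one_app (B L : list R) : InV B 1 -> L <> nil -> InV (B ++ L) 1.
Proof.
  intros HB HL. destruct (InV_exists L HL) as [y Hy].
  apply (InV_comb B L _ 1 y 1); eauto using InV_not_nil, Permutation_refl.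
  do 6 right; left.
  replace 1 with (Rpower 1 y) at 2
    by (unfold Rpower; rewrite ln_1, Rmult_0_r, exp_0; reflexivity).
  constructor; lra.
Qed.

Definition unit_blocks (u : nat) (S : list R) : Prop :=
  exists bl : list (list R), length bl = u /\ Forall (fun B => InV B 1) bl /\
    Permutation (concat bl) S.

Lemma unit_blocks_perm (u : nat) (S S' : list R) :
  unit_blocks u S -> Permutation S S' -> unit_blocks u S'.
Proof.
  intros [bl (Hlen & Hone & Hperm)] HS.
  exists bl; repeat split; auto. now apply perm_trans with S.
Qed.

Lemma unit_blocks_app (a b : nat) (A B : list R) :
  unit_blocks a A -> unit_blocks b B -> unit_blocks (a + b) (A ++ B).
Proof.
  intros [bl1 (H1 & H2 & H3)] [bl2 (G1 & G2 & G3)].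
  exists (bl1 ++ bl2). rewrite length_app, concat_app.
  repeat split; [lia | now apply Forall_app | now apply Permutation_app].
Qed.

Lemma unit_blocks_1 (S : list R) : InV S 1 -> unit_blocks 1 S.
Proof.
  intros HS. exists (S :: nil). simpl. rewrite app_nil_r. repeat split; auto.
Qed.

Lemma unit_blocks_merge (u : nat) (X : list R) :
  (1 <= u)%nat -> unit_blocks (S u) X -> unit_blocks u X.
Proof.
  intros Hu [bl (Hlen & Hone & Hperm)].
  destruct bl as [|B1 [|B2 bl]]; simpl in Hlen; try lia.
  inversion Hone as [|? ? HB1 Hone']; inversion Hone' as [|? ? HB2 Hone_tl].
  exists ((B1 ++ B2) :: bl). simpl in *. split; [lia|]. split.
  - constructor; auto. apply (InV_comb B1 B2 _ 1 1 1); eauto using InV_not_nil.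
    do 3 right; left; ring.
  - now rewrite <- app_assoc.
Qed.

Lemma unit_blocks_le (u U : nat) (S : list R) :
  (1 <= u <= U)%nat -> unit_blocks U S -> unit_blocks u S.
Proof.
  intros [Hu HuU]. induction HuU as [|U HuU IH]; auto.
  intros HS. apply IH, unit_blocks_merge; auto. lia.
Qed.

Lemma unit_blocks_absorb (u : nat) (S L : list R) :
  (1 <= u)%nat -> unit_blocks u S -> unit_blocks u (S ++ L).
Proof.
  intros Hu [bl (Hlen & Hone & Hperm)].
  destruct L as [|l L]; [rewrite app_nil_r; exists bl; auto|].
  destruct bl as [|B1 bl]; simpl in Hlen; try lia.
  inversion Hone as [|? ? HB1 Hone'].
  exists ((B1 ++ l :: L) :: bl). simpl in *. split; [lia|]. split.
  - constructor; auto. apply InV_one_app; auto; discriminate.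
  - eapply perm_trans; [|apply Permutation_app_tail; exact Hperm].
    rewrite <- !app_assoc. apply Permutation_app_head, Permutation_app_comm.
Qed.

Lemma concat_unit_blocks_not_nil (bl : list (list R)) :
  Forall (fun B => InV B 1) bl -> bl <> nil -> concat bl <> nil.
Proof.
  intros Hone Hbl. destruct bl as [|B bl]; [congruence|].
  inversion Hone as [|? ? HB]. simpl.
  intros Hnil. apply app_eq_nil in Hnil. now apply (InV_not_nil B 1).
Qed.

Lemma unit_blocks_split (a b : nat) (S : list R) :
  (1 <= a)%nat -> (1 <= b)%nat -> unit_blocks (a + b) S ->
  exists A B, A <> nil /\ B <> nil /\ Permutation (A ++ B) S /\
    unit_blocks a A /\ unit_blocks b B.
Proof.
  intros Ha Hb [bl (Hlen & Hone & Hperm)].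
  rewrite <- (firstn_skipn a bl) in Hone, Hperm.
  apply Forall_app in Hone as [Hone1 Hone2]. rewrite concat_app in Hperm.
  assert (Hlen1 : length (firstn a bl) = a) by (rewrite length_firstn; lia).
  assert (Hlen2 : length (skipn a bl) = b) by (rewrite length_skipn; lia).
  exists (concat (firstn a bl)), (concat (skipn a bl)).
  repeat split; auto.
  - apply concat_unit_blocks_not_nil; auto. intros E; rewrite E in Hlen1; simpl in Hlen1; lia.
  - apply concat_unit_blocks_not_nil; auto. intros E; rewrite E in Hlen2; simpl in Hlen2; lia.
  - exists (firstn a bl); auto.
  - exists (skipn a bl); auto.
Qed.

Definition from_ones (u : nat) (z : R) : Prop :=
  forall S, unit_blocks u S -> InV S z.

Lemma from_ones_op (a b : nat) (x y z : R) :
  (1 <= a)%nat -> (1 <= b)%nat -> from_ones a x -> from_ones b y ->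
  op_res x y z -> from_ones (a + b) z.
Proof.
  intros Ha Hb Hx Hy Hop S HS.
  destruct (unit_blocks_split a b S Ha Hb HS) as (A & B & HA & HB & HAB & HuA & HuB).
  apply (InV_comb A B S x y z); auto.
Qed.

Lemma from_ones_fact (u m : nat) :
  from_ones u (INR m) -> from_ones u (INR (fact m)).
Proof. intros Hm S HS. apply InV_fact, Hm, HS. Qed.

Lemma from_ones_1 : from_ones 1 1.
Proof.
  intros S [bl (Hlen & Hone & Hperm)].
  destruct bl as [|B [|]]; simpl in Hlen; try lia.
  inversion Hone as [|? ? HB]. simpl in Hperm. rewrite app_nil_r in Hperm.
  now apply InV_perm with B.
Qed.

Lemma from_ones_succ (u : nat) (x : R) :
  (1 <= u)%nat -> from_ones u x -> from_ones (u + 1) (x + 1).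
Proof.
  intros Hu Hx. apply (from_ones_op u 1 x 1); auto using from_ones_1.
  now left.
Qed.

Lemma from_ones_small (r : nat) : (1 <= r <= 3)%nat -> from_ones r (INR r).
Proof.
  intros Hr. destruct r as [|[|[|[|]]]]; try lia; simpl.
  - exact from_ones_1.
  - apply (from_ones_succ 1); auto using from_ones_1.
  - apply (from_ones_succ 2); [lia|]. apply (from_ones_succ 1); auto using from_ones_1.
Qed.

Lemma from_ones_6 : from_ones 3 6.
Proof.
  replace 6 with (INR (fact 3)) by (simpl; ring).
  apply from_ones_fact, from_ones_small; lia.
Qed.

Lemma from_ones_mul6 (u m : nat) :
  (1 <= u)%nat -> from_ones u (INR m) -> from_ones (u + 3) (INR (6 * m)).
Proof.
  intros Hu Hm. apply (from_ones_op u 3 (INR m) 6); auto using from_ones_6.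
  do 3 right; left. rewrite mult_INR. simpl; ring.
Qed.

Definition ones_cost_bounded (n : nat) : Prop :=
  exists u, (1 <= u)%nat /\ (6 ^ (2 * u) <= 36 * n ^ 13)%nat /\ from_ones u (INR n).

Lemma nat_le_of_N (a b : nat) : (N.of_nat a <= N.of_nat b)%N -> (a <= b)%nat.
Proof. lia. Qed.

Lemma cost_bound_step (um m n c b : nat) :
  (6 ^ (2 * um) <= 36 * m ^ 13)%nat -> (6 ^ c <= b ^ 13)%nat -> (b * m <= n)%nat ->
  (6 ^ (2 * um + c) <= 36 * n ^ 13)%nat.
Proof.
  intros Hm Hc Hbm. rewrite Nat.pow_add_r.
  apply Nat.le_trans with (36 * m ^ 13 * b ^ 13)%nat; [now apply Nat.mul_le_mono|].
  rewrite <- Nat.mul_assoc, <- Nat.pow_mul_l.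
  apply Nat.mul_le_mono_l, Nat.pow_le_mono_l. lia.
Qed.

Lemma ones_cost_bounded_small (n : nat) : (1 <= n <= 3)%nat -> ones_cost_bounded n.
Proof.
  intros Hn. exists n. repeat split; [lia| |now apply from_ones_small].
  apply nat_le_of_N. rewrite !Nat2N.inj_mul, !Nat2N.inj_pow.
  destruct n as [|[|[|[|]]]]; try lia; vm_compute; discriminate.
Qed.

Lemma ones_cost_bounded_add (m r : nat) :
  (r <= 3)%nat -> ones_cost_bounded m -> ones_cost_bounded (6 * m + r).
Proof.
  intros Hr (u & Hu & Hbound & Hm).
  exists (u + 3 + r)%nat. repeat split; [lia| |].
  - replace (2 * (u + 3 + r))%nat with (2 * u + (6 + 2 * r))%nat by lia.
    apply (cost_bound_step u m _ _ 6); auto; [apply Nat.pow_le_mono_r|]; lia.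
  - pose proof (from_ones_mul6 u m Hu Hm) as H6m.
    destruct (Nat.eq_dec r 0) as [->|Hr0].
    + now rewrite !Nat.add_0_r.
    + apply (from_ones_op (u + 3) r (INR (6 * m)) (INR r)); auto; try lia.
      * apply from_ones_small; lia.
      * left. apply plus_INR.
Qed.

(* Rounding up to the next multiple of 6 is cheaper when the last base-6 digit is 4 or 5. *)
Lemma ones_cost_bounded_sub (m s : nat) :
  (1 <= s <= 2)%nat -> (1 <= m)%nat -> ones_cost_bounded m ->
  ones_cost_bounded (6 * m - s).
Proof.
  intros Hs Hm1 (u & Hu & Hbound & Hm).
  exists (u + 3 + s)%nat. repeat split; [lia| |].
  - replace (2 * (u + 3 + s))%nat with (2 * u + (6 + 2 * s))%nat by lia.
    apply (cost_bound_step u m _ _ (6 - s)); auto; [|nia].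
    apply nat_le_of_N. rewrite !Nat2N.inj_pow.
    destruct s as [|[|[|]]]; try lia; vm_compute; discriminate.
  - apply (from_ones_op (u + 3) s (INR (6 * m)) (INR s)); try lia.
    + now apply from_ones_mul6.
    + apply from_ones_small; lia.
    + right; left. apply minus_INR. lia.
Qed.

Lemma ones_cost_bounded_pos (n : nat) : (1 <= n)%nat -> ones_cost_bounded n.
Proof.
  induction n as [n IH] using lt_wf_ind. intros Hn.
  destruct (Nat.lt_ge_cases n 4) as [Hsmall|Hlarge].
  { apply ones_cost_bounded_small. lia. }
  pose proof (Nat.div_mod_eq n 6) as Hqr.
  pose proof (Nat.mod_upper_bound n 6 ltac:(lia)) as Hr.
  set (q := (n / 6)%nat) in *. set (r := (n mod 6)%nat) in *.
  rewrite Hqr.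
  destruct (Nat.le_gt_cases r 3) as [Hr3|Hr4].
  - apply ones_cost_bounded_add; auto. apply IH; lia.
  - replace (6 * q + r)%nat with (6 * (q + 1) - (6 - r))%nat by lia.
    apply ones_cost_bounded_sub; try lia. apply IH; lia.
Qed.

Lemma InV_digit_one (d : nat) : (d <= 1)%nat -> InV (INR d :: nil) 1.
Proof.
  intros Hd. destruct d as [|[|]]; try lia; simpl.
  - change 1 with (INR (fact 0)). apply InV_fact. constructor.
  - constructor.
Qed.

(* Digits with the same half are equal or consecutive: [d / d = 1] or [|d - e| = 1]. *)
Lemma InV_digit_pair_one (d e : nat) :
  (2 <= d)%nat -> Nat.div2 d = Nat.div2 e -> InV (INR d :: INR e :: nil) 1.
Proof.
  intros Hd Hde.
  apply (InV_comb (INR d :: nil) (INR e :: nil) _ (INR d) (INR e));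
    [discriminate | discriminate | apply Permutation_refl | constructor | constructor |].
  assert (Hcases : d = e \/ d = S e \/ e = S d).
  { pose proof (Nat.div2_odd d). pose proof (Nat.div2_odd e).
    destruct (Nat.odd d), (Nat.odd e); simpl in *; lia. }
  destruct Hcases as [<- | [-> | ->]].
  - assert (INR d <> 0) by (apply not_0_INR; lia).
    do 4 right; left. split; [assumption|]. field; assumption.
  - right; left. rewrite S_INR. ring.
  - do 2 right; left. rewrite S_INR. ring.
Qed.

Definition sparse_digits (t : list nat) : Prop :=
  Forall (fun d => (2 <= d <= 9)%nat) t /\ NoDup (map Nat.div2 t).

Lemma sparse_digits_length (t : list nat) : sparse_digits t -> (length t <= 4)%nat.
Proof.
  intros [Hrange Hnodup]. rewrite <- (length_map Nat.div2 t).
  apply (NoDup_incl_length (l' := (1 :: 2 :: 3 :: 4 :: nil)%nat) Hnodup).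
  intros x Hx. apply in_map_iff in Hx as (d & <- & Hd).
  rewrite Forall_forall in Hrange. specialize (Hrange d Hd).
  destruct d as [|[|[|[|[|[|[|[|[|[|]]]]]]]]]]; simpl; try lia; tauto.
Qed.

Lemma digits_unit_or_sparse (ds : list nat) :
  Forall (fun d => (d < 10)%nat) ds ->
  (exists g rest, Permutation ds (g ++ rest) /\ InV (map INR g) 1 /\ (length g <= 2)%nat)
  \/ sparse_digits ds.
Proof.
  induction ds as [|d t IH]; intros Hdig; [right; split; constructor|].
  inversion Hdig as [|? ? Hd Ht].
  destruct (IH Ht) as [(g & rest & Hperm & Hg & Hlen) | [Hrange Hnodup]].
  { left. exists g, (d :: rest). repeat split; auto.
    eapply perm_trans; [apply perm_skip, Hperm|]. apply Permutation_middle. }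
  destruct (Nat.le_gt_cases d 1) as [Hd1|Hd2].
  { left. exists (d :: nil), t. repeat split; auto. now apply InV_digit_one. }
  destruct (in_dec Nat.eq_dec (Nat.div2 d) (map Nat.div2 t)) as [Hin|Hnin].
  - apply in_map_iff in Hin as (e & He & Het).
    apply in_split in Het as (l1 & l2 & ->).
    left. exists (d :: e :: nil), (l1 ++ l2). repeat split.
    + simpl. apply perm_skip, Permutation_sym, Permutation_middle.
    + apply InV_digit_pair_one; auto; lia.
    + simpl; lia.
  - right. split; constructor; auto. lia.
Qed.

Lemma digits_unit_blocks (ds : list nat) :
  Forall (fun d => (d < 10)%nat) ds ->
  exists U, (length ds <= 2 * U + 4)%nat /\ ((1 <= U)%nat -> unit_blocks U (map INR ds)).
Proof.
  induction ds as [ds IH] using (well_founded_ind (Wf_nat.well_founded_ltof _ (@length nat))).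
  intros Hdig.
  destruct (digits_unit_or_sparse ds Hdig) as [(g & rest & Hperm & Hg & Hlen) | Hsparse].
  2: { exists 0%nat. split; [apply sparse_digits_length in Hsparse; lia | lia]. }
  assert (Hg_len : length g <> 0%nat)
    by (intros Hl; apply length_zero_iff_nil in Hl; subst; eapply InV_not_nil; eauto).
  assert (Hds_len : length ds = (length g + length rest)%nat)
    by (now rewrite (Permutation_length Hperm), length_app).
  assert (Hrest : Forall (fun d => (d < 10)%nat) rest).
  { apply (Permutation_Forall Hperm), Forall_app in Hdig. tauto. }
  destruct (IH rest ltac:(unfold Wf_nat.ltof; lia) Hrest) as (U & HU & HUblocks).
  exists (S U). split; [lia|]. intros _.
  apply unit_blocks_perm with (map INR g ++ map INR rest).
  2: { rewrite <- map_app. now apply Permutation_map, Permutation_sym. }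
  destruct U as [|U].
  - apply unit_blocks_absorb, unit_blocks_1; auto.
  - apply (unit_blocks_app 1 (S U)); [now apply unit_blocks_1 | apply HUblocks; lia].
Qed.

Lemma log6_bound_le (n k u : nat) : (1 <= n)%nat ->
  INR k >= 13 * log6 (INR n) + 7 -> (6 ^ (2 * u) <= 36 * n ^ 13)%nat ->
  (2 * u + 5 <= k)%nat.
Proof.
  intros Hn Hk Hbound.
  assert (Hln6 : 0 < ln 6) by (rewrite <- ln_1; apply ln_increasing; lra).
  assert (Hnpos : 0 < INR n) by (apply lt_0_INR; lia).
  apply le_INR in Hbound. rewrite mult_INR, !pow_INR in Hbound.
  replace (INR 6) with 6 in Hbound by (simpl; ring).
  replace (INR 36) with (6 ^ 2) in Hbound by (simpl; ring).
  assert (Hln : ln (6 ^ (2 * u)) <= ln (6 ^ 2 * INR n ^ 13)).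
  { apply Rnot_lt_le. intros Hlt.
    apply ln_lt_inv in Hlt; [lra| |apply pow_lt; lra].
    apply Rmult_lt_0_compat; apply pow_lt; lra. }
  rewrite ln_mult, !ln_pow in Hln by (try apply pow_lt; lra).
  unfold log6 in Hk.
  assert (H13 : 13 * ln (INR n) <= (INR k - 7) * ln 6).
  { replace (13 * ln (INR n)) with (13 * (ln (INR n) / ln 6) * ln 6) by (field; lra).
    apply Rmult_le_compat_r; lra. }
  apply INR_le. rewrite plus_INR, !mult_INR in *.
  apply Rmult_le_reg_r with (ln 6); [assumption|].
  simpl (INR 2) in *. simpl (INR 5). simpl (INR 13) in Hln. lra.
Qed.

Theorem theorem6p2 : forall (n k : nat), (1 <= n)%nat ->
  INR k >= 13 * log6 (INR n) + 7 -> InE k (INR n).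
Proof.
  intros n k Hn Hk ds Hlen Hdig.
  destruct (ones_cost_bounded_pos n Hn) as (u & Hu & Hbound & Hn_ones).
  pose proof (log6_bound_le n k u Hn Hk Hbound) as Hku.
  destruct (digits_unit_blocks ds Hdig) as (U & HU & HUblocks).
  apply Hn_ones, (unit_blocks_le u U); [lia|].
  apply HUblocks. lia.
Qed.
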